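(* Let $g\ge1$, $n\ge3$, $k\in\{1,\dots,n\}$, and let $y\in A_g^n$ be a point at which $f_k$ attains its minimum on $A_g^n$. Then $y=y(g,n,i_0)$ for some $i_0\le k$.
   Context: For $g,n\ge1$, $A_g^n\subseteq\mathbb{R}^n$ is the set of $(x_1,\dots,x_n)$ with $x_1\ge\dots\ge x_n\ge0$, $x_1+\dots+x_n=1/g$, and $x_1\cdots x_k\le g(x_{k+1}+\dots+x_n)$ for all $k=1,\dots,n-1$. $f_k(x)=x_1\cdots x_k$ on $A_g^n$. Sylvester sequences: $s_{g,1}=g+1$, $s_{g,k+1}=s_{g,k}(s_{g,k}-1)+1$, $t_{g,k}=s_{g,k}-1$. For $1\le k\le n$, $y(g,n,k)=\big(\tfrac1{s_{g,1}},\dots,\tfrac1{s_{g,k-1}},\tfrac{1}{(n-k+1)t_{g,k}},\dots,\tfrac{1}{(n-k+1)t_{g,k}}\big)\in A_g^n$, the last entry repeated $n-k+1$ times. *)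

(* R : realType (the reals), vectors in R^n as 'rV[R]_n,
   0-based indices (paper's x_i is x 0 (i-1)). *)
From mathcomp Require Import all_boot all_order all_algebra.
From mathcomp Require Import reals.
Unset Printing Implicit Defensive.
Import Order.TTheory GRing.Theory Num.Theory.
Local Open Scope ring_scope.

(* sylv0 g m = s_{g,m+1} *)
Fixpoint sylv0 (g m : nat) : nat :=
  match m with
  | 0 => g.+1
  | m'.+1 => (sylv0 g m' * (sylv0 g m' - 1) + 1)%N
  end.

(* Paper's s_{g,k} (k >= 1); the value at k = 0 is irrelevant. *)
Definition sylv (g k : nat) : nat := sylv0 g k.-1.
Definition tsylv (g k : nat) : nat := (sylv g k - 1)%N.

Definition inA {R : realType} (g n : nat) (x : 'rV[R]_n) : Prop :=
  (forall i j : 'I_n, (i <= j)%N -> x 0 j <= x 0 i) /\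
  (forall i : 'I_n, i.+1 = n -> 0 <= x 0 i) /\
  \sum_(i < n) x 0 i = 1 / g%:R /\
  (forall k : nat, (1 <= k <= n - 1)%N ->
     \prod_(i < n | (i < k)%N) x 0 i <= g%:R * \sum_(i < n | (k <= i)%N) x 0 i).

Definition fk {R : realType} {n : nat} (k : nat) (x : 'rV[R]_n) : R :=
  \prod_(i < n | (i < k)%N) x 0 i.

Definition yv {R : realType} (g n k : nat) : 'rV[R]_n :=
  \row_(i < n) (if (i.+1 <= k - 1)%N then 1 / (sylv g i.+1)%:R
                else 1 / ((n - k + 1)%:R * (tsylv g k)%:R)).

From mathcomp Require Import all_boot all_order all_algebra.
From mathcomp Require Import reals.
From mathcomp Require Import ring lra zify.
Import Order.TTheory GRing.Theory Num.Theory.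
Local Open Scope ring_scope.

(* Let y minimize f_k on A_g^n and let x_1 ... x_{p+1} <= g (x_{p+2} + ... + x_n) be the
   first slack constraint (p = n - 1 if there is none).  The tight constraints before it
   force x_i = 1/s_{g,i} for i <= p.  If p >= k, then y(g,n,k) has a smaller value of f_k.
   If p < k, the coordinates x_{p+1}, ..., x_n must all be equal, which makes y = y(g,n,p+1):
   otherwise a perturbation that keeps the sum and all the constraints lowers f_k.  Either
   a constant block x_{p+1} = ... = x_k is spread evenly over the whole tail, or mass moves
   between the two ends of a slack block before x_k, or from x_{p+1} to the last strict
   drop beyond x_k, or a constant tail x_{p+2}, ..., x_n is tilted by -d and d against
   x_{p+1}, and the two resulting values of f_k have product below f_k(y)^2. *)

(* [lia] gets very slow in contexts full of real-valued facts, so we discard them first. *)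
Ltac nat_lia :=
  repeat match goal with
  | H : is_true (@Order.le _ _ _ _) |- _ => clear H
  | H : is_true (@Order.lt _ _ _ _) |- _ => clear H
  | H : @eq ?T _ _ |- _ => tryif first [unify T nat | unify T bool] then fail else clear H
  | H : forall _, _ |- _ => clear H
  end; lia.

Lemma sylv0_gt0 g l : (0 < sylv0 g l)%N.
Proof. by case: l => [|l] //=; rewrite addn1. Qed.

Lemma sylv0_ge2 g l : (0 < g)%N -> (2 <= sylv0 g l)%N.
Proof. by move=> hg; elim: l => [|l IH] /=; [nat_lia | nia]. Qed.

Section Sequences.
Context {R : realFieldType} {g n : nat}.
Local Notation G := (g%:R : R).
Hypothesis G_ge1 : 1 <= G.

Lemma G_gt0 : 0 < G.
Proof. by apply: lt_le_trans G_ge1. Qed.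

Definition head_prod (a : nat -> R) j := \prod_(0 <= i < j) a i.
Definition tail_sum (a : nat -> R) j := \sum_(j <= i < n) a i.

(* [feasible a] says that [(a 0, ..., a n.-1)] lies in A_g^n (see [inA_feasible]); sequences
   [nat -> R] spare us the ordinal bookkeeping of row vectors. *)
Record feasible (a : nat -> R) : Prop := Feasible {
  feasible_step : forall i, (i.+1 < n)%N -> a i.+1 <= a i;
  feasible_last : 0 <= a n.-1;
  feasible_sum : tail_sum a 0 = G^-1;
  feasible_constr : forall j, (0 < j)%N -> (j < n)%N -> head_prod a j <= G * tail_sum a j }.

Arguments feasible_step {a}.
Arguments feasible_last {a}.
Arguments feasible_sum {a}.
Arguments feasible_constr {a}.

Lemma head_prod0 a : head_prod a 0 = 1.
Proof. by rewrite /head_prod big_geq. Qed.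

Lemma head_prodS a j : head_prod a j.+1 = head_prod a j * a j.
Proof. by rewrite /head_prod big_nat_recr. Qed.

Lemma head_prod_cat a {m j} :
  (m <= j)%N -> head_prod a j = head_prod a m * \prod_(m <= i < j) a i.
Proof. by move=> h; rewrite /head_prod (big_cat_nat (leq0n m) h). Qed.

Lemma eq_head_prod a b j :
  (forall i, (i < j)%N -> a i = b i) -> head_prod a j = head_prod b j.
Proof. by move=> E; apply: eq_big_nat => i /andP[_ /E]. Qed.

Lemma head_prod_gt0 a j : (forall i, (i < j)%N -> 0 < a i) -> 0 < head_prod a j.
Proof.
move=> h; rewrite /head_prod big_nat_cond.
by apply: prodr_gt0 => i /andP[/andP[_ /h]].
Qed.

Lemma head_prod_ge0 a j : (forall i, (i < j)%N -> 0 <= a i) -> 0 <= head_prod a j.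
Proof.
move=> h; rewrite /head_prod big_nat_cond.
by apply: prodr_ge0 => i /andP[/andP[_ /h]].
Qed.

Lemma head_prod_le1 a j : (forall i, (i < j)%N -> 0 <= a i <= 1) -> head_prod a j <= 1.
Proof.
move=> h; rewrite /head_prod big_nat_cond.
by apply: prodr_ile1 => i /andP[/andP[_ /h]].
Qed.

Lemma tail_sum_cat a {j m} :
  (j <= m)%N -> (m <= n)%N -> tail_sum a j = \sum_(j <= i < m) a i + tail_sum a m.
Proof. by move=> h1 h2; rewrite /tail_sum (big_cat_nat h1 h2). Qed.

Lemma tail_sumS a {j} : (j < n)%N -> tail_sum a j = a j + tail_sum a j.+1.
Proof. by move=> h; rewrite /tail_sum big_ltn. Qed.

Lemma tail_sum_size a : tail_sum a n = 0.
Proof. by rewrite /tail_sum big_geq. Qed.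

Lemma eq_tail_sum a b j :
  (forall i, (j <= i < n)%N -> a i = b i) -> tail_sum a j = tail_sum b j.
Proof. by move=> E; apply: eq_big_nat. Qed.

Lemma tail_sum_const a j c :
  (forall i, (j <= i < n)%N -> a i = c) -> tail_sum a j = (n - j)%:R * c.
Proof. by move=> E; rewrite (@eq_tail_sum a (fun=> c) j E) /tail_sum sumr_const_nat mulr_natl. Qed.

Lemma tail_sum_ge0 a j : (forall i, (i < n)%N -> 0 <= a i) -> 0 <= tail_sum a j.
Proof.
move=> h; rewrite /tail_sum big_nat_cond.
by apply: sumr_ge0 => i /andP[/andP[_ /h]].
Qed.

Lemma entry_le_tail_sum0 a i :
  (forall l, (l < n)%N -> 0 <= a l) -> (i < n)%N -> a i <= tail_sum a 0.
Proof.
move=> h hi; rewrite (tail_sum_cat a (leq0n i) (ltnW hi)) (tail_sumS a hi).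
have h1 : 0 <= \sum_(0 <= l < i) a l.
  by rewrite big_nat_cond; apply: sumr_ge0 => l /andP[/andP[_ hl] _]; apply: h; nat_lia.
by have := tail_sum_ge0 a i.+1 h; lra.
Qed.

Lemma entry_in01 a i : (forall l, (l < n)%N -> 0 <= a l) -> tail_sum a 0 = G^-1 ->
  (i < n)%N -> 0 <= a i <= 1.
Proof.
move=> h hs hi; rewrite h //=; apply: le_trans (entry_le_tail_sum0 a i h hi) _.
by rewrite hs invf_le1 ?G_ge1 ?G_gt0.
Qed.

(* All entries lie in [0, 1], so [head_prod a j <= a j.-1 <= a j <= tail_sum a j]. *)
Lemma constr_of_rise a j : (forall l, (l < n)%N -> 0 <= a l) -> tail_sum a 0 = G^-1 ->
  (0 < j)%N -> (j < n)%N -> a j.-1 <= a j -> head_prod a j <= G * tail_sum a j.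
Proof.
move=> h hs; case: j => [//|j] _ hj /= hle.
have unit := entry_in01 a _ h hs.
have hP : head_prod a j <= 1 by apply: head_prod_le1 => i hi; apply: unit; nat_lia.
have hP0 : 0 <= head_prod a j by apply: head_prod_ge0 => i hi; apply: h; nat_lia.
have /andP[haj _] := unit j (ltnW hj).
have hT := tail_sum_ge0 a j.+2 h.
have hG := G_ge1.
rewrite head_prodS (tail_sumS a hj); nra.
Qed.

Lemma feasible_size_gt0 {a} : feasible a -> (0 < n)%N.
Proof.
case=> _ _ hs _; rewrite lt0n; apply/eqP => n0.
by move: hs; rewrite /tail_sum n0 big_geq // => /esym/eqP; rewrite invr_eq0 gt_eqF ?G_gt0.
Qed.

Lemma feasible_nonincr {a} : feasible a ->
  forall i j, (i <= j)%N -> (j < n)%N -> a j <= a i.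
Proof.
case=> hm _ _ _ i j hij; elim: j hij => [|j IH] hij hj; first by have -> : i = 0%N by nat_lia.
case: (ltngtP i j.+1) => [h|h|->] //; last by nat_lia.
by apply: le_trans (hm _ hj) (IH _ _); nat_lia.
Qed.

Lemma feasible_gt0 {a} : feasible a -> forall i, (i < n)%N -> 0 < a i.
Proof.
move=> fa i hi; have [_ hlast hsum hc] := fa.
have mono := feasible_nonincr fa.
have ge0 j : (j < n)%N -> 0 <= a j by move=> hj; apply: le_trans hlast (mono _ _ _ _); nat_lia.
suff last_gt0 : 0 < a n.-1 by apply: lt_le_trans last_gt0 (mono _ _ _ _); nat_lia.
rewrite lt_def hlast andbT; apply/eqP => last0.
have ex0 : exists j, (j < n)%N && (a j == 0) by exists n.-1; rewrite last0 eqxx andbT; nat_lia.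
have [p /andP[hp /eqP ap0] pmin] := ex_minnP ex0.
have tail0 : tail_sum a p = 0.
  rewrite (tail_sum_const a p 0) ?mulr0 // => j /andP[hpj hj].
  by apply/le_anti; rewrite ge0 // -ap0 mono.
case: p hp ap0 pmin tail0 => [|p] hp _ pmin tail0.
  by move: hsum; rewrite tail0 => /esym/eqP; rewrite invr_eq0 gt_eqF ?G_gt0.
have : 0 < head_prod a p.+1.
  apply: head_prod_gt0 => j hj; rewrite lt_def ge0 ?andbT; last by nat_lia.
  by apply/eqP => aj0; have := pmin j; rewrite aj0 eqxx andbT => /(_ (ltn_trans hj hp)); nat_lia.
by have := hc p.+1 isT hp; rewrite tail0 mulr0; lra.
Qed.

Lemma feasible_lt1 {a} i : (1 < n)%N -> feasible a -> (i < n)%N -> a i < 1.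
Proof.
move=> n_gt1 fa hi; have pos := feasible_gt0 fa.
apply: le_lt_trans (feasible_nonincr fa 0 i (leq0n i) hi) _.
have : a 0%N < tail_sum a 0.
  rewrite (tail_sumS a (_ : 0 < n)%N) ?(tail_sumS a (_ : 1 < n)%N); try nat_lia.
  have := pos 1%N ltac:(nat_lia).
  by have := tail_sum_ge0 a 2 (fun l hl => ltW (pos l hl)); lra.
rewrite feasible_sum // => /lt_le_trans; apply.
by rewrite invf_le1 ?G_ge1 ?G_gt0.
Qed.

Lemma constr_lt_of_flat {a j} : (3 <= n)%N -> feasible a -> (0 < j)%N -> (j < n)%N -> a j.-1 = a j ->
  head_prod a j < G * tail_sum a j.
Proof.
move=> n_ge3 fa; case: j => [//|j] _ hj /= flat.
have pos := feasible_gt0 fa.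
have ge0 l : (l < n)%N -> 0 <= a l by move=> hl; apply: ltW; apply: pos.
have n_gt1 : (1 < n)%N by nat_lia.
have unit l : (l < n)%N -> 0 <= a l <= 1 by move=> hl; rewrite ge0 // ltW // feasible_lt1.
apply: lt_le_trans (ler_peMl (tail_sum_ge0 a _ ge0) G_ge1).
have hP0 : 0 <= head_prod a j by apply: head_prod_ge0 => l hl; apply: ge0; nat_lia.
have hP1 : head_prod a j <= 1 by apply: head_prod_le1 => l hl; apply: unit; nat_lia.
have aj := pos j (ltnW hj).
rewrite head_prodS (tail_sumS a hj) -flat.
case: (ltnP j.+2 n) => hjn.
  have := pos j.+2 hjn; have := tail_sum_ge0 a j.+3 ge0.
  rewrite (tail_sumS a hjn); nra.
rewrite (_ : j.+2 = n) ?tail_sum_size ?addr0; last by nat_lia.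
case: j hj flat hjn hP0 hP1 aj => [|j] hj flat hjn hP0 hP1 aj; first by nat_lia.
have hP2 : head_prod a j <= 1 by apply: head_prod_le1 => l hl; apply: unit; nat_lia.
have hP3 : 0 <= head_prod a j by apply: head_prod_ge0 => l hl; apply: ge0; nat_lia.
have aj1 : a j < 1 by apply: (feasible_lt1 j n_gt1 fa); nat_lia.
have aj0 := ge0 j ltac:(nat_lia).
have : head_prod a j * a j < 1 by nra.
by rewrite head_prodS; nra.
Qed.

(* [sylvr l] and [tsylvr l] are the paper's s_{g,l+1} and t_{g,l+1}. *)
Definition sylvr l : R := (sylv0 g l)%:R.
Definition tsylvr l : R := sylvr l - 1.

Let g_gt0 : (0 < g)%N.
Proof. by rewrite -(ler1n R). Qed.

Lemma sylvrE l : sylvr l = tsylvr l + 1.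
Proof. by rewrite /tsylvr; ring. Qed.

Lemma tsylvr0 : tsylvr 0 = G.
Proof. by rewrite /tsylvr /sylvr /= -addn1 natrD; ring. Qed.

Lemma tsylvrS l : tsylvr l.+1 = sylvr l * tsylvr l.
Proof.
rewrite /tsylvr /sylvr /= natrD natrM natrB; last by rewrite sylv0_gt0.
ring.
Qed.

Lemma tsylvr_ge1 l : 1 <= tsylvr l.
Proof.
have : (2%:R : R) <= sylvr l by rewrite ler_nat (sylv0_ge2 _ _ g_gt0).
by rewrite /tsylvr; lra.
Qed.

Lemma tsylvr_gt0 l : 0 < tsylvr l.
Proof. by have := tsylvr_ge1 l; lra. Qed.

Lemma sylvr_gt0 l : 0 < sylvr l.
Proof. by rewrite sylvrE; have := tsylvr_ge1 l; lra. Qed.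

Lemma tsylvr_ge2 l : (0 < l)%N -> 2 <= tsylvr l.
Proof. by case: l => [//|l] _; rewrite tsylvrS sylvrE; have := tsylvr_ge1 l; nra. Qed.

Lemma sylvr_le_succ l : sylvr l <= sylvr l.+1.
Proof. by rewrite !sylvrE tsylvrS sylvrE; have := tsylvr_ge1 l; nra. Qed.

Definition sylv_recip l : R := (sylvr l)^-1.

Lemma head_prod_sylv_recip j : head_prod sylv_recip j = G / tsylvr j.
Proof.
elim: j => [|j IH]; first by rewrite head_prod0 tsylvr0 divff // gt_eqF // G_gt0.
rewrite head_prodS IH /sylv_recip tsylvrS.
by field; rewrite !gt_eqF ?sylvr_gt0 ?tsylvr_gt0.
Qed.

Lemma sum_sylv_recip j : \sum_(0 <= l < j) sylv_recip l = G^-1 - (tsylvr j)^-1.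
Proof.
elim: j => [|j IH]; first by rewrite big_geq // tsylvr0 subrr.
rewrite big_nat_recr //= IH /sylv_recip tsylvrS sylvrE.
have := tsylvr_gt0 j => ht.
by field; rewrite !gt_eqF ?G_gt0 //; lra.
Qed.

Definition level p : R := ((n - p)%:R * tsylvr p)^-1.

(* [ymin p] is the paper's y(g,n,p+1). *)
Definition ymin p l : R := if (l < p)%N then sylv_recip l else level p.

Lemma level_gt0 p : (p < n)%N -> 0 < level p.
Proof. by move=> h; rewrite invr_gt0 mulr_gt0 ?tsylvr_gt0 // ltr0n; nat_lia. Qed.

Lemma level_le1 p : (p < n)%N -> level p <= 1.
Proof.
move=> h; rewrite invf_le1 ?mulr_gt0 ?tsylvr_gt0 ?ltr0n ?subn_gt0 //.
have : 1 <= (n - p)%:R :> R by rewrite ler1n; nat_lia.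
by have := tsylvr_ge1 p; nra.
Qed.

Lemma levelE p : (p < n)%N -> (n - p)%:R * level p = (tsylvr p)^-1.
Proof.
move=> h; rewrite /level invfM mulrA divff ?mul1r // pnatr_eq0; nat_lia.
Qed.

Lemma head_prod_ymin_le p j : (j <= p)%N -> head_prod (ymin p) j = G / tsylvr j.
Proof.
move=> h; rewrite -head_prod_sylv_recip; apply: eq_head_prod => i hi.
by rewrite /ymin ifT //; nat_lia.
Qed.

Lemma head_prod_ymin_ge p j :
  (p <= j)%N -> head_prod (ymin p) j = G / tsylvr p * level p ^+ (j - p).
Proof.
move=> h; rewrite (head_prod_cat _ h) head_prod_ymin_le //; congr (_ * _).
rewrite -prodr_const_nat; apply: eq_big_nat => i /andP[hi _].
by rewrite /ymin ifF //; nat_lia.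
Qed.

Lemma tail_sum_ymin_ge p j : (p <= j)%N -> tail_sum (ymin p) j = (n - j)%:R * level p.
Proof. by move=> h; apply: tail_sum_const => i /andP[hi _]; rewrite /ymin ifF //; nat_lia. Qed.

Lemma sum_ymin_le p j : (j <= p)%N ->
  \sum_(0 <= l < j) ymin p l = G^-1 - (tsylvr j)^-1.
Proof.
move=> h; rewrite -sum_sylv_recip; apply: eq_big_nat => i /andP[_ hi].
by rewrite /ymin ifT //; nat_lia.
Qed.

Lemma tail_sum_ymin0 p : (p < n)%N -> tail_sum (ymin p) 0 = G^-1.
Proof.
move=> h; rewrite (tail_sum_cat _ (leq0n p) (ltnW h)) sum_ymin_le // tail_sum_ymin_ge //.
by rewrite levelE // subrK.
Qed.

Lemma tail_sum_ymin_le p j : (p < n)%N -> (j <= p)%N ->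
  tail_sum (ymin p) j = (tsylvr j)^-1.
Proof.
move=> hp hj; have := tail_sum_ymin0 p hp.
by rewrite (tail_sum_cat _ (leq0n j) (leq_trans hj (ltnW hp))) sum_ymin_le //; lra.
Qed.

Lemma ymin_feasible p : (p < n)%N -> feasible (ymin p).
Proof.
move=> hp; split.
- move=> l hl; rewrite /ymin; case: (ltnP l.+1 p) => h1.
    rewrite (ltn_trans (ltnSn l) h1).
    by rewrite /sylv_recip lef_pV2 ?posrE ?sylvr_gt0 // sylvr_le_succ.
  case: (ltnP l p) => // h2.
  have -> : p = l.+1 by nat_lia.
  rewrite /level /sylv_recip tsylvrS lef_pV2 ?posrE ?sylvr_gt0 //; last first.
    by rewrite !mulr_gt0 ?sylvr_gt0 ?tsylvr_gt0 // ltr0n; nat_lia.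
  have hN : 1 <= (n - l.+1)%:R :> R by rewrite ler1n; nat_lia.
  have hst : sylvr l <= sylvr l * tsylvr l by rewrite ler_peMr ?tsylvr_ge1 // ltW ?sylvr_gt0.
  have hst0 : 0 <= sylvr l * tsylvr l by rewrite ltW // mulr_gt0 ?sylvr_gt0 ?tsylvr_gt0.
  exact: le_trans hst (ler_peMl hst0 hN).
- rewrite /ymin; case: ifP => _; last exact: ltW (level_gt0 p hp).
  by rewrite /sylv_recip invr_ge0 ltW ?sylvr_gt0.
- exact: tail_sum_ymin0.
- move=> j hj0 hj; case: (leqP j p) => h.
    by rewrite head_prod_ymin_le // tail_sum_ymin_le.
  rewrite head_prod_ymin_ge ?tail_sum_ymin_ge; try nat_lia.
  have hl0 := level_gt0 p hp; have hl1 := level_le1 p hp.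
  have hlx : level p ^+ (j - p) <= level p.
    have : (0 < j - p)%N by nat_lia.
    case: (j - p)%N => [//|m] _; rewrite exprS.
    by apply: ler_piMr; [exact: ltW | exact: exprn_ile1 (ltW hl0) hl1].
  have hv : G / tsylvr p <= G.
    rewrite ler_pdivrMr ?tsylvr_gt0 //.
    by apply: ler_peMr; [exact: ltW G_gt0 | exact: tsylvr_ge1].
  have hn : 1 <= (n - j)%:R :> R by rewrite ler1n; nat_lia.
  have hG := G_gt0.
  have hvp : 0 <= G / tsylvr p by rewrite divr_ge0 // ltW // tsylvr_gt0.
  apply: (@le_trans _ _ (G * level p)); first by apply: ler_pM => //; rewrite exprn_ge0 // ltW.
  by rewrite ler_pM2l // ler_peMl // ltW.
Qed.

Lemma head_prod_prefix {a p} : (forall l, (l < p)%N -> a l = sylv_recip l) ->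
  head_prod a p = G / tsylvr p.
Proof. by move=> h; rewrite -head_prod_sylv_recip; apply: eq_head_prod. Qed.

Lemma tail_sum_prefix {a p} : feasible a -> (p <= n)%N ->
  (forall l, (l < p)%N -> a l = sylv_recip l) -> tail_sum a p = (tsylvr p)^-1.
Proof.
move=> fa hp h; have := feasible_sum fa.
rewrite (tail_sum_cat a (leq0n p) hp) (eq_big_nat _ _ (F2 := sylv_recip)); last first.
  by move=> i /andP[_ /h].
by rewrite sum_sylv_recip; lra.
Qed.

Lemma tight_prefix {a p} : feasible a -> (p < n)%N ->
  (forall j, (0 < j)%N -> (j <= p)%N -> head_prod a j = G * tail_sum a j) ->
  forall l, (l < p)%N -> a l = sylv_recip l.
Proof.
move=> fa hp tight; elim/ltn_ind => l IH hl.
have pre i : (i < l)%N -> a i = sylv_recip i by move=> hi; apply: IH; nat_lia.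
have hP := head_prod_prefix pre.
have hT : tail_sum a l.+1 = (tsylvr l)^-1 - a l.
  have hln : (l < n)%N by nat_lia.
  by have := tail_sum_prefix fa (ltnW hln) pre; rewrite (tail_sumS a hln); lra.
have := tight l.+1 isT hl; rewrite head_prodS hP hT => E.
have ht := tsylvr_gt0 l; have hG := G_gt0.
have H : a l * sylvr l = 1.
  apply/eqP; rewrite -subr_eq0 sylvrE.
  have -> : a l * (tsylvr l + 1) - 1 = (G / tsylvr l * a l - G * ((tsylvr l)^-1 - a l)) * (tsylvr l / G).
    by field; rewrite !gt_eqF.
  by rewrite E subrr mul0r.
by rewrite /sylv_recip -[_^-1]mul1r -H mulfK // gt_eqF // sylvr_gt0.
Qed.

Definition update (a : nat -> R) p v i := if i == p then v else a i.

Lemma head_prod_update_le a p v j : (j <= p)%N -> head_prod (update a p v) j = head_prod a j.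
Proof. by move=> h; apply: eq_head_prod => i hi; rewrite /update ifF //; apply/eqP; nat_lia. Qed.

Lemma head_prod_update_gt a p v j : (p < j)%N ->
  head_prod (update a p v) j * a p = head_prod a j * v.
Proof.
move=> h; rewrite !(head_prod_cat _ h) !head_prodS !head_prod_update_le //.
rewrite (eq_big_nat _ _ (F2 := a)); last by move=> i hi; rewrite /update ifF //; apply/eqP; nat_lia.
by rewrite /update eqxx; ring.
Qed.

Lemma tail_sum_update a p v j : (p < n)%N ->
  tail_sum (update a p v) j = tail_sum a j + (if (j <= p)%N then v - a p else 0).
Proof.
move=> hp; case: (leqP j p) => h; last first.
  by rewrite addr0; apply: eq_tail_sum => i hi; rewrite /update ifF //; apply/eqP; nat_lia.
rewrite !(tail_sum_cat _ h (ltnW hp)) !(tail_sumS _ hp).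
rewrite (eq_big_nat _ _ (F2 := a)); last by move=> i hi; rewrite /update ifF //; apply/eqP; nat_lia.
rewrite (@eq_tail_sum (update a p v) a); last by move=> i hi; rewrite /update ifF //; apply/eqP; nat_lia.
by rewrite /update eqxx; ring.
Qed.

Definition transfer a p q e := update (update a p (a p + e)) q (a q - e).

Lemma head_prod_transfer_le {a p q e j} : (j <= p)%N -> (p < q)%N ->
  head_prod (transfer a p q e) j = head_prod a j.
Proof. by move=> h1 h2; rewrite !head_prod_update_le //; nat_lia. Qed.

Lemma head_prod_transfer_mid {a p q e j} : (p < j)%N -> (j <= q)%N ->
  head_prod (transfer a p q e) j * a p = head_prod a j * (a p + e).
Proof. by move=> h1 h2; rewrite head_prod_update_le // head_prod_update_gt. Qed.

Lemma head_prod_transfer_gt {a p q e j} : (p < q)%N -> (q < j)%N ->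
  head_prod (transfer a p q e) j * (a p * a q) = head_prod a j * ((a p + e) * (a q - e)).
Proof.
move=> hpq hqj; have Eq := head_prod_update_gt (update a p (a p + e)) q (a q - e) j hqj.
have Ep := head_prod_update_gt a p (a p + e) j (ltn_trans hpq hqj).
have uq : update a p (a p + e) q = a q by rewrite /update ifF //; apply/eqP; nat_lia.
rewrite uq in Eq.
transitivity (head_prod (transfer a p q e) j * a q * a p); first by ring.
rewrite Eq; transitivity (head_prod (update a p (a p + e)) j * a p * (a q - e)); first by ring.
by rewrite Ep; ring.
Qed.

Lemma head_prod_transfer_lt {a p q e j} : (p < q)%N -> (q < j)%N ->
  0 < head_prod a j -> 0 < a p * a q -> (a p + e) * (a q - e) < a p * a q ->
  head_prod (transfer a p q e) j < head_prod a j.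
Proof.
move=> hpq hqj hP hpq0 hlt; rewrite -(ltr_pM2r hpq0) head_prod_transfer_gt //.
by rewrite ltr_pM2l.
Qed.

Lemma tail_sum_transfer {a p q e} j : (p < q)%N -> (q < n)%N ->
  tail_sum (transfer a p q e) j =
  tail_sum a j + (if (j <= p)%N then e else 0) - (if (j <= q)%N then e else 0).
Proof.
move=> hpq hqn; have uq : update a p (a p + e) q = a q by rewrite /update ifF //; apply/eqP; nat_lia.
by rewrite tail_sum_update // uq tail_sum_update ?(ltn_trans hpq) //; case: ifP; case: ifP => _ _; ring.
Qed.

Lemma exists_pos_lower_bound {h : nat -> R} {N c} : 0 < c ->
  (forall j, (j < N)%N -> 0 < h j) ->
  exists e, [/\ 0 < e, e <= c & forall j, (j < N)%N -> e <= h j].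
Proof.
move=> hc; elim: N => [|N IH] hh; first by exists c; split.
have [e [e0 ec eh]] := IH (fun j hj => hh j (ltnW hj)).
exists (Order.min e (h N)); split; first by rewrite lt_min e0 hh.
  by rewrite ge_min ec.
move=> j hj; rewrite ge_min; case: (ltngtP j N) => [/eh ->|| ->] //; first by nat_lia.
by rewrite lexx orbT.
Qed.

Definition minimizer k a := forall c, feasible c -> head_prod a k <= head_prod c k.

Lemma feasible_transfer_front {a p q e} : feasible a -> (p < q)%N -> (q < n)%N -> 0 < e ->
  ((0 < p)%N -> a p + e <= a p.-1) -> ((q.+1 < n)%N -> a q.+1 <= a q - e) ->
  0 <= a q - e ->
  (forall j, (p < j)%N -> (j <= q)%N ->
     e * (head_prod a j / a p + G) <= G * tail_sum a j - head_prod a j) ->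
  feasible (transfer a p q e).
Proof.
move=> fa hpq hqn he prev_p next_q hq0 slack.
have [hm hl hs hc] := fa.
have pos := feasible_gt0 fa.
have hap := pos p (ltn_trans hpq hqn).
have haq : a q <= a p by apply: feasible_nonincr fa _ _ (ltnW hpq) hqn.
have hP0 j : (j <= n)%N -> 0 <= head_prod a j.
  by move=> hj; apply: head_prod_ge0 => i hi; apply: ltW; apply: pos; nat_lia.
split.
- move=> i hi; rewrite /transfer /update.
  case: (i.+1 =P q) => h1; case: (i.+1 =P p) => h2; case: (i =P q) => h3;
    case: (i =P p) => h4 /=; try (exfalso; nat_lia).
  + lra.
  + by rewrite -h1; have := hm i hi; lra.
  + by move: prev_p; rewrite -h2 /= => /(_ isT); lra.
  + by rewrite h3; apply: next_q; nat_lia.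
  + by rewrite h4; have := hm p (_ : p.+1 < n)%N; move=> /(_ ltac:(nat_lia)); lra.
  + exact: hm.
- rewrite /transfer /update; case: eqP => [_ // | _]; case: eqP => [hp | _ //].
  by exfalso; nat_lia.
- by rewrite tail_sum_transfer // hs /=; ring.
- move=> j hj0 hj; rewrite tail_sum_transfer //; case: (leqP j p) => h1.
    by rewrite head_prod_transfer_le // (leq_trans h1 (ltnW hpq)) addrK; apply: hc.
  case: (leqP j q) => h2; last first.
    rewrite subr0 addr0.
    have hpq0 : 0 < a p * a q by rewrite mulr_gt0 // pos.
    apply: le_trans (hc j hj0 hj); rewrite -(ler_pM2r hpq0).
    rewrite head_prod_transfer_gt //; apply: ler_wpM2l; [apply: hP0; nat_lia | nra].
  have E : head_prod (transfer a p q e) j = head_prod a j + e * (head_prod a j / a p).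
    apply: (mulIf (lt0r_neq0 hap)); rewrite (head_prod_transfer_mid h1 h2).
    by field; rewrite gt_eqF.
  by rewrite E addr0; have := slack j h1 h2; lra.
Qed.

Lemma feasible_transfer_back {a p r e} : feasible a -> (p.+1 < r)%N -> (r < n)%N -> 0 < e ->
  a p.+1 <= a p - e -> a r + e <= a r.-1 ->
  (forall j, (r < j)%N -> (j < n)%N ->
     e * (head_prod a j / a r) <= G * tail_sum a j - head_prod a j) ->
  feasible (transfer a p r (- e)).
Proof.
move=> fa hpr hrn he next_p prev_r slack.
have [hm hl hs hc] := fa.
have pos := feasible_gt0 fa.
have hpr' : (p < r)%N by nat_lia.
have hap := pos p (ltn_trans hpr' hrn); have har := pos r hrn.
have hP0 j : (j <= n)%N -> 0 <= head_prod a j.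
  by move=> hj; apply: head_prod_ge0 => i hi; apply: ltW; apply: pos; nat_lia.
split.
- move=> i hi; rewrite /transfer /update.
  case: (i.+1 =P r) => h1; case: (i.+1 =P p) => h2; case: (i =P r) => h3;
    case: (i =P p) => h4 /=; try (exfalso; nat_lia).
  + by move: prev_r; rewrite -h1 /=; lra.
  + by rewrite -h2; have := hm i hi; lra.
  + by rewrite h3; have := hm r (_ : r.+1 < n)%N; move=> /(_ ltac:(nat_lia)); lra.
  + by rewrite h4; lra.
  + exact: hm.
- rewrite /transfer /update; case: eqP => _; first lra.
  case: eqP => [hp | _ //].
  by exfalso; nat_lia.
- by rewrite tail_sum_transfer // hs /=; ring.
- move=> j hj0 hj; rewrite tail_sum_transfer //; case: (leqP j p) => h1.
    by rewrite head_prod_transfer_le // (leq_trans h1 (ltnW hpr')) addrK; apply: hc.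
  have hP := hP0 j (ltnW hj).
  case: (leqP j r) => h2.
    have : head_prod (transfer a p r (- e)) j * a p <= head_prod a j * a p.
      by rewrite head_prod_transfer_mid //; apply: ler_wpM2l; lra.
    rewrite ler_pM2r // => /le_trans; apply; apply: le_trans (hc j hj0 hj) _.
    by rewrite ler_pM2l ?G_gt0 //; lra.
  set Q := head_prod a j / a r.
  have HQ : Q * a r = head_prod a j by rewrite /Q mulfVK // gt_eqF.
  have hQ : 0 <= Q by rewrite /Q divr_ge0 // ltW.
  have hpr0 : 0 < a p * a r by rewrite mulr_gt0.
  have hP' : head_prod (transfer a p r (- e)) j <= head_prod a j + e * Q.
    have gap : 0 <= Q * a r * e * (a r + e).
      by apply: mulr_ge0; [apply: mulr_ge0; [apply: mulr_ge0 |] |]; lra.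
    by rewrite -(ler_pM2r hpr0) head_prod_transfer_gt // -HQ; lra.
  by rewrite addr0 subr0; have := slack j h2 hj; rewrite -/Q; lra.
Qed.

Lemma not_minimal_front {a k p q} : feasible a -> minimizer k a ->
  (p < q)%N -> (q < k)%N -> (k <= n)%N ->
  ((0 < p)%N -> a p < a p.-1) -> ((q < n.-1)%N -> a q.+1 < a q) ->
  (forall j, (p < j)%N -> (j <= q)%N -> head_prod a j < G * tail_sum a j) -> False.
Proof.
move=> fa amin hpq hqk hkn drop_p drop_q slack.
have pos := feasible_gt0 fa.
have hqn : (q < n)%N by nat_lia.
have hap := pos p (ltn_trans hpq hqn); have haq := pos q hqn.
have haqp : a q <= a p by apply: feasible_nonincr fa _ _ (ltnW hpq) hqn.
have hP0 j : (j <= n)%N -> 0 < head_prod a j.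
  by move=> hj; apply: head_prod_gt0 => i hi; apply: pos; nat_lia.
set gap := Order.min (if (0 < p)%N then a p.-1 - a p else 1)
                     (if (q < n.-1)%N then a q - a q.+1 else a q).
have gap0 : 0 < gap.
  rewrite lt_min; apply/andP; split; case: ifP => // h; [have := drop_p h | have := drop_q h]; lra.
pose h j := (G * tail_sum a j - head_prod a j) / (head_prod a j / a p + G).
have hQ j : (j < n)%N -> 0 < head_prod a j / a p + G.
  by move=> hj; rewrite ltr_wpDl ?G_gt0 // divr_ge0 // ltW // hP0 // ltnW.
have hpos j : (j < n)%N -> 0 < (if (p < j <= q)%N then h j else 1).
  case: ifP => // /andP[h1 h2] hj; rewrite divr_gt0 ?hQ //.
  by have := slack j h1 h2; lra.
have [e [e0 egap eh]] := exists_pos_lower_bound gap0 hpos.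
move: egap; rewrite le_min => /andP[e_prev e_next].
have fe : feasible (transfer a p q e).
  apply: feasible_transfer_front => //.
  - by move=> h0; move: e_prev; rewrite h0; lra.
  - by move=> h0; move: e_next; rewrite ifT; [lra | nat_lia].
  - by move: e_next; case: ifP => h0; [have := pos q.+1 ltac:(nat_lia) | ]; lra.
  - move=> j h1 h2; have hj := leq_ltn_trans h2 hqn.
    by have := eh j hj; rewrite h1 h2 /= ler_pdivlMr ?hQ.
have := amin _ fe; apply/negP; rewrite -ltNge.
by apply: head_prod_transfer_lt; rewrite ?mulr_gt0 ?hP0 //; nra.
Qed.

Lemma not_minimal_back {a k p r} : feasible a -> minimizer k a ->
  (p < k)%N -> (k < r)%N -> (r < n)%N -> a p.+1 < a p -> a r < a r.-1 ->
  (forall j, (r < j)%N -> (j < n)%N -> head_prod a j < G * tail_sum a j) -> False.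
Proof.
move=> fa amin hpk hkr hrn drop_p drop_r slack.
have pos := feasible_gt0 fa.
have hap := pos p (ltn_trans hpk (ltn_trans hkr hrn)); have har := pos r hrn.
have hP0 j : (j <= n)%N -> 0 < head_prod a j.
  by move=> hj; apply: head_prod_gt0 => i hi; apply: pos; nat_lia.
have gap0 : 0 < Order.min (a p - a p.+1) (a r.-1 - a r).
  by rewrite lt_min; apply/andP; split; lra.
pose h j := (G * tail_sum a j - head_prod a j) / (head_prod a j / a r).
have hpos j : (j < n)%N -> 0 < (if (r < j)%N then h j else 1).
  case: ifP => // hrj hj; have hPj := hP0 j (ltnW hj).
  by rewrite divr_gt0 ?divr_gt0 //; have := slack j hrj hj; lra.
have [e [e0 egap eh]] := exists_pos_lower_bound gap0 hpos.
move: egap; rewrite le_min => /andP[e_p e_r].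
have fe : feasible (transfer a p r (- e)).
  apply: feasible_transfer_back => //; try lra; first by nat_lia.
  move=> j h1 h2; have hPj := hP0 j (ltnW h2).
  by have := eh j h2; rewrite h1 ler_pdivlMr ?divr_gt0 // mulrC.
have := amin _ fe; apply/negP; rewrite -ltNge -(ltr_pM2r hap).
have hPk : 0 < head_prod a k by apply: hP0; nat_lia.
by rewrite (head_prod_transfer_mid hpk (ltnW hkr)) ltr_pM2l //; lra.
Qed.

Lemma tilt_prod_lt {A X L w d : R} t : 0 < A -> 0 < X -> 0 < L -> 0 < d -> d <= w ->
  (A * (X + L * d) * (w - d) ^+ t) * (A * (X - L * d) * (w + d) ^+ t) < (A * X * w ^+ t) ^+ 2.
Proof.
move=> hA hX hL hd hdw.
have -> : (A * (X + L * d) * (w - d) ^+ t) * (A * (X - L * d) * (w + d) ^+ t)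
    = (A * A) * ((X * X - L * d * (L * d)) * ((w - d) * (w + d)) ^+ t).
  by rewrite exprMn; ring.
have -> : (A * X * w ^+ t) ^+ 2 = (A * A) * ((X * X) * (w * w) ^+ t) by rewrite [(w * w) ^+ t]exprMn; ring.
rewrite ltr_pM2l ?mulr_gt0 //.
have hu0 : 0 <= (w - d) * (w + d) by apply: mulr_ge0; lra.
have hw : 0 < (w * w) ^+ t by rewrite exprn_gt0 // mulr_gt0 //; lra.
have hut : ((w - d) * (w + d)) ^+ t <= (w * w) ^+ t.
  have hdd : 0 <= d * d by rewrite mulr_ge0 // ltW.
  by rewrite lerXn2r ?nnegrE ?mulr_ge0 //; lra.
have hLd : 0 < L * d * (L * d) by rewrite !mulr_gt0.
case: (lerP (X * X - L * d * (L * d)) 0) => hs.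
  apply: (@le_lt_trans _ _ 0); first by rewrite mulr_le0_ge0 // exprn_ge0.
  by rewrite mulr_gt0 // mulr_gt0.
apply: (@le_lt_trans _ _ ((X * X - L * d * (L * d)) * (w * w) ^+ t)).
  by rewrite ler_wpM2l // ltW.
by rewrite ltr_pM2r //; lra.
Qed.

(* The factor [n - p.+1], the number of later coordinates, keeps the total sum unchanged. *)
Definition tilt (a : nat -> R) p e i :=
  if (i < p)%N then a i else if i == p then a p + (n - p.+1)%:R * e else a p.+1 - e.

Lemma tilt_at a p e : tilt a p e p = a p + (n - p.+1)%:R * e.
Proof. by rewrite /tilt ltnn eqxx. Qed.

Lemma tilt_gt a p e i : (p < i)%N -> tilt a p e i = a p.+1 - e.
Proof.
move=> h; have h1 : (i < p)%N = false by apply/negbTE; rewrite -leqNgt ltnW.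
by rewrite /tilt h1 ifF //; apply/eqP; nat_lia.
Qed.

Section Tilt.
Context {a : nat -> R} {p : nat}.
Hypothesis p_lt_n : (p.+1 < n)%N.
Hypothesis flat_tail : forall i, (p < i)%N -> (i < n)%N -> a i = a p.+1.

Lemma tilt0 i : (i < n)%N -> tilt a p 0 i = a i.
Proof.
move=> hi; rewrite /tilt mulr0 addr0 subr0; case: ifP => // h1.
by case: eqP => [-> //|h2]; rewrite flat_tail //; nat_lia.
Qed.

Lemma head_prod_tilt_le e j : (j <= p)%N -> head_prod (tilt a p e) j = head_prod a j.
Proof. by move=> hj; apply: eq_head_prod => i hi; rewrite /tilt ifT //; nat_lia. Qed.

Lemma head_prod_tilt e {j} : (p < j)%N ->
  head_prod (tilt a p e) j =
  head_prod a p * (a p + (n - p.+1)%:R * e) * (a p.+1 - e) ^+ (j - p.+1).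
Proof.
move=> hj; rewrite (head_prod_cat _ hj) head_prodS head_prod_tilt_le // tilt_at.
rewrite -prodr_const_nat; congr (_ * _); apply: eq_big_nat => i /andP[hi _].
by rewrite tilt_gt.
Qed.

Lemma tail_sum_tilt_succ e : tail_sum (tilt a p e) p.+1 = (n - p.+1)%:R * (a p.+1 - e).
Proof. by apply: tail_sum_const => i /andP[hi _]; rewrite tilt_gt. Qed.

Lemma tail_sum_tilt_le e j : (j <= p)%N -> tail_sum (tilt a p e) j = tail_sum a j.
Proof.
move=> hj; have hpn : (p < n)%N by nat_lia.
rewrite !(tail_sum_cat _ hj (ltnW hpn)) !(tail_sumS _ hpn) tail_sum_tilt_succ.
rewrite (@tail_sum_const a p.+1 (a p.+1)) ?tilt_at; last by move=> i /andP[hi ?]; apply: flat_tail.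
rewrite (eq_big_nat _ _ (F2 := a)); last by move=> i /andP[_ hi]; rewrite /tilt hi.
by ring.
Qed.

Local Notation L := ((n - p.+1)%:R : R).

Lemma feasible_tilt e d : feasible a -> 0 < d -> - d <= e -> e <= d -> d <= a p.+1 ->
  ((0 < p)%N -> L * d <= a p.-1 - a p) -> (L + 1) * d <= a p - a p.+1 ->
  L * d * (head_prod a p + G) <= G * tail_sum a p.+1 - head_prod a p.+1 ->
  feasible (tilt a p e).
Proof.
move=> fa hd he1 he2 hdw gap_prev gap_next slack.
have [hm hl hs hc] := fa.
have pos := feasible_gt0 fa.
have hL : 0 < L by rewrite ltr0n; nat_lia.
have hLe1 : - (L * d) <= L * e by rewrite -mulrN ler_pM2l.
have hLe2 : L * e <= L * d by rewrite ler_pM2l.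
have hsum : tail_sum (tilt a p e) 0 = G^-1 by rewrite tail_sum_tilt_le.
have hnn l : (l < n)%N -> 0 <= tilt a p e l.
  move=> hl'; case: (ltnP p l) => h; first by rewrite tilt_gt //; lra.
  rewrite /tilt; case: ifP => [_|/negbT]; first by apply/ltW/pos.
  rewrite -leqNgt => hpl; rewrite ifT; last by rewrite eqn_leq h hpl.
  lra.
split => //.
- move=> i hi; case: (ltnP p i) => h1; first by rewrite !tilt_gt //; nat_lia.
  case: (ltngtP i p) => h2; last by rewrite h2 tilt_gt // tilt_at; lra.
    rewrite /tilt h2; case: (ltnP i.+1 p) => h3; first exact: hm.
    have ep : i.+1 = p by nat_lia.
    have hp0 : (0 < p)%N by nat_lia.
    have := gap_prev hp0; rewrite (_ : p.-1 = i); last by nat_lia.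
    by rewrite ep eqxx; lra.
  by nat_lia.
- by rewrite tilt_gt; [lra | nat_lia].
- move=> j hj0 hj; case: (ltngtP j p.+1) => h.
  + have hjp : (j <= p)%N by nat_lia.
    by rewrite head_prod_tilt_le // tail_sum_tilt_le //; apply: hc.
  + apply: constr_of_rise => //.
    by rewrite !tilt_gt //; nat_lia.
  + rewrite h head_prod_tilt // subnn expr0 mulr1 tail_sum_tilt_succ.
    have hPp : 0 <= head_prod a p by apply: head_prod_ge0 => i hi; apply/ltW/pos; nat_lia.
    have hG := G_gt0.
    have : L * e * (head_prod a p + G) <= L * d * (head_prod a p + G).
      by rewrite ler_wpM2r //; lra.
    move: slack; rewrite head_prodS (@tail_sum_const a p.+1 (a p.+1)) //.
      by move=> *; nra.
    by move=> i /andP[hi ?]; apply: flat_tail.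
Qed.

Lemma exists_tilt_radius : feasible a -> ((0 < p)%N -> a p < a p.-1) -> a p.+1 < a p ->
  head_prod a p.+1 < G * tail_sum a p.+1 ->
  exists d, [/\ 0 < d, d <= a p.+1 & forall e, - d <= e -> e <= d -> feasible (tilt a p e)].
Proof.
move=> fa drop_p drop_w slack.
have pos := feasible_gt0 fa.
have hw : 0 < a p.+1 := pos p.+1 p_lt_n.
have hL : 0 < L by rewrite ltr0n; nat_lia.
have hP : 0 < head_prod a p by apply: head_prod_gt0 => i hi; apply: pos; nat_lia.
have hG := G_gt0.
pose gap := if (0 < p)%N then a p.-1 - a p else 1.
have gap0 : 0 < gap by rewrite /gap; case: ifP => // /drop_p; lra.
pose s := G * tail_sum a p.+1 - head_prod a p.+1.
have s0 : 0 < s by rewrite /s; lra.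
pose d := Order.min (gap / L) (Order.min ((a p - a p.+1) / (L + 1))
            (Order.min (a p.+1) (s / (L * (head_prod a p + G))))).
have d0 : 0 < d.
  have h1 : 0 < gap / L by rewrite divr_gt0.
  have h2 : 0 < (a p - a p.+1) / (L + 1) by rewrite divr_gt0 //; lra.
  have h3 : 0 < s / (L * (head_prod a p + G)) by rewrite divr_gt0 // mulr_gt0 // addr_gt0.
  by rewrite !lt_min h1 h2 h3 hw.
have d1 : d <= gap / L by rewrite /d ge_min lexx.
have d2 : d <= (a p - a p.+1) / (L + 1) by rewrite /d !ge_min lexx orbT.
have d3 : d <= a p.+1 by rewrite /d !ge_min lexx !orbT.
have d4 : d <= s / (L * (head_prod a p + G)) by rewrite /d !ge_min lexx !orbT.
exists d; split => // e he1 he2; apply: (feasible_tilt e d fa d0) => //.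
- by move=> hp0; move: d1; rewrite /gap hp0 ler_pdivlMr // mulrC.
- by move: d2; rewrite ler_pdivlMr ?addr_gt0 //; lra.
- by move: d4; rewrite /s ler_pdivlMr ?mulr_gt0 ?addr_gt0 //; lra.
Qed.

(* Tilting by [d] and by [-d] multiplies f_k by factors whose product is below [1]
   ([tilt_prod_lt]), so one of the two tilts lowers f_k. *)
Lemma not_minimal_tilt {k} : feasible a -> minimizer k a -> (p.+1 < k)%N -> (k < n)%N ->
  ((0 < p)%N -> a p < a p.-1) -> a p.+1 < a p ->
  head_prod a p.+1 < G * tail_sum a p.+1 -> False.
Proof.
move=> fa amin hpk hkn drop_p drop_w slack.
have [d [d0 dw fe]] := exists_tilt_radius fa drop_p drop_w slack.
have pos := feasible_gt0 fa.
have hap : 0 < a p := pos p (ltnW p_lt_n).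
have hw : 0 < a p.+1 := pos p.+1 p_lt_n.
have hL : 0 < L by rewrite ltr0n; nat_lia.
have hP : 0 < head_prod a p by apply: head_prod_gt0 => i hi; apply: pos; nat_lia.
have hpk' : (p < k)%N by nat_lia.
have f0 : head_prod a k = head_prod a p * a p * a p.+1 ^+ (k - p.+1).
  have := head_prod_tilt 0 hpk'; rewrite mulr0 addr0 subr0 => <-.
  by apply: eq_head_prod => i hi; rewrite tilt0 //; nat_lia.
have Fp := amin _ (fe d ltac:(lra) (lexx d)).
have Fm := amin _ (fe (- d) (lexx _) ltac:(lra)).
rewrite f0 (head_prod_tilt _ hpk') in Fp.
rewrite f0 (head_prod_tilt _ hpk') mulrN opprK in Fm.
have := tilt_prod_lt (k - p.+1) hP hap hL d0 dw.
have F0 : 0 <= head_prod a p * a p * a p.+1 ^+ (k - p.+1).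
  by rewrite !mulr_ge0 ?exprn_ge0 ?ltW.
by apply/negP; rewrite -leNgt expr2; apply: ler_pM.
Qed.

End Tilt.

Lemma exists_first_drop {a : nat -> R} {p} : (forall i, (i.+1 < n)%N -> a i.+1 <= a i) -> (p.+1 < n)%N ->
  exists b, [/\ (p < b)%N, (b < n)%N, ((b.+1 < n)%N -> a b.+1 < a b) &
               forall i, (p < i)%N -> (i <= b)%N -> a i = a p.+1].
Proof.
move=> hm hpn.
have ex : exists i, (p < i)%N && ((i == n.-1) || (a i.+1 < a i)).
  by exists n.-1; rewrite eqxx andbT; nat_lia.
have [b /andP[hpb hb] bmin] := ex_minnP ex.
have hbn : (b <= n.-1)%N by apply: bmin; rewrite eqxx andbT; nat_lia.
have flat i : (p < i)%N -> (i < b)%N -> a i.+1 = a i.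
  move=> h1 h2; apply/le_anti; rewrite hm /=; last by nat_lia.
  rewrite leNgt; apply/negP => hlt.
  by have := bmin i; rewrite h1 hlt orbT => /(_ isT); nat_lia.
exists b; split; [by [] | nat_lia | | ].
  move=> h; have hb' : (b == n.-1) = false by apply/eqP; nat_lia.
  by move: hb; rewrite hb'.
elim=> [//|i IH] h1 h2; case: (ltngtP p i) => h3; [| nat_lia | by rewrite h3].
by rewrite flat ?IH //; nat_lia.
Qed.

Lemma exists_last_drop {a : nat -> R} {m} : (m.+1 < n)%N -> a m.+1 < a m ->
  exists r, [/\ (m < r)%N, (r < n)%N, a r < a r.-1 &
               forall j, (r < j)%N -> (j < n)%N -> ~ a j < a j.-1].
Proof.
move=> hmn hdrop.
have ex : exists i, (i.+1 < n)%N && (a i.+1 < a i) by exists m; rewrite hmn hdrop.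
have ub i : (i.+1 < n)%N && (a i.+1 < a i) -> (i <= n)%N by case/andP => h _; nat_lia.
have [d /andP[hdn hd] dmax] := ex_maxnP ex ub.
have hmd : (m <= d)%N by apply: dmax; rewrite hmn hdrop.
exists d.+1; split => //.
move=> j h1 h2 hj; have := dmax j.-1; rewrite prednK ?hj ?h2 //=; last by nat_lia.
by move=> /(_ isT); nat_lia.
Qed.

Lemma eq_feasible {a b} : (forall l, (l < n)%N -> a l = b l) -> feasible a -> feasible b.
Proof.
move=> E fa; have n_gt0 := feasible_size_gt0 fa; case: fa => hm hl hs hc.
have EP j : (j <= n)%N -> head_prod a j = head_prod b j.
  by move=> hj; apply: eq_head_prod => i hi; apply: E; nat_lia.
have ET j : tail_sum a j = tail_sum b j by apply: eq_tail_sum => i /andP[_ /E].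
split.
- by move=> i hi; rewrite -!E //; [exact: hm | nat_lia].
- by rewrite -E; [exact: hl | nat_lia].
- by rewrite -ET.
- by move=> j h1 h2; rewrite -EP -?ET; [exact: hc | nat_lia].
Qed.

(* Compare with [ymin p], which spreads the same tail mass evenly. *)
Lemma not_minimal_const_block {a k p} : feasible a -> minimizer k a -> (p < k)%N -> (k <= n)%N ->
  (forall l, (l < p)%N -> a l = sylv_recip l) ->
  (forall i, (p <= i)%N -> (i < k)%N -> a i = a p) -> a n.-1 < a p -> False.
Proof.
move=> fa amin hpk hkn pre const hlast.
have mono := feasible_nonincr fa.
have hpn : (p < n)%N by nat_lia.
have hn1 : (n.-1 < n)%N by nat_lia.
have hfa : head_prod a k = G / tsylvr p * a p ^+ (k - p).
  rewrite (head_prod_cat _ (ltnW hpk)) (head_prod_prefix pre) -prodr_const_nat.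
  by congr (_ * _); apply: eq_big_nat => i /andP[h1 h2]; apply: const.
have hT : tail_sum a p < (n - p)%:R * a p.
  have hpn1 : (p <= n.-1)%N by nat_lia.
  rewrite (tail_sum_cat a hpn1 (ltnW hn1)) (tail_sumS a hn1) (prednK (leq_ltn_trans (leq0n p) hpn)).
  have hle : \sum_(p <= i < n.-1) a i <= \sum_(p <= i < n.-1) a p.
    rewrite big_nat_cond [X in _ <= X]big_nat_cond.
    by apply: ler_sum => i /andP[/andP[h1 h2] _]; apply: mono; nat_lia.
  rewrite sumr_const_nat -mulr_natl in hle.
  have -> : (n - p)%:R = (n.-1 - p)%:R + 1 :> R by rewrite natr1; congr (_%:R); nat_lia.
  by rewrite tail_sum_size addr0 mulrDl mul1r; lra.
have hlevel : level p < a p.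
  have hnp : 0 < (n - p)%:R :> R by rewrite ltr0n; nat_lia.
  by rewrite -(ltr_pM2l hnp) levelE // -(tail_sum_prefix fa (ltnW hpn) pre).
have := amin _ (ymin_feasible p hpn); rewrite head_prod_ymin_ge ?(ltnW hpk) // hfa.
apply/negP; rewrite -ltNge ltr_pM2l ?divr_gt0 ?G_gt0 ?tsylvr_gt0 //.
by rewrite ltrXn2r ?(ltW (level_gt0 p hpn)) //; apply/eqP; nat_lia.
Qed.

(* Let [b] be the first drop after [p]: the block [(p, b]] is slack, and the perturbation
   that lowers f_k depends on where [b] lies relative to [k] and [n]. *)
Lemma not_minimal_tail_drop {a k p} : (3 <= n)%N -> feasible a -> minimizer k a ->
  (p.+1 < k)%N -> (k <= n)%N -> ((0 < p)%N -> a p < a p.-1) ->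
  head_prod a p.+1 < G * tail_sum a p.+1 -> a k.-1 < a p -> False.
Proof.
move=> n_ge3 fa amin hpk hkn drop_p slack hk.
have mono := feasible_nonincr fa.
have hp1n : (p.+1 < n)%N by nat_lia.
have [b [hpb hbn drop_b flat]] := exists_first_drop (feasible_step fa) hp1n.
have slack_flat j : (p.+1 < j)%N -> (j <= b)%N -> head_prod a j < G * tail_sum a j.
  move=> h1 h2; have hj0 : (0 < j)%N by nat_lia.
  have hjn : (j < n)%N by nat_lia.
  by apply: (constr_lt_of_flat n_ge3 fa hj0 hjn); rewrite (flat j.-1) ?(flat j) //; nat_lia.
case: (ltnP b k) => hbk.
  apply: (not_minimal_front fa amin hpb hbk hkn drop_p) => [h|j h1 h2].
    by apply: drop_b; nat_lia.
  by case: (ltngtP j p.+1) => h3; [nat_lia | apply: slack_flat | rewrite h3].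
have hwp : a p.+1 < a p by rewrite -(flat k.-1) //; nat_lia.
case: (ltnP b.+1 n) => hbn1.
  have [r [hbr hrn drop_r no_drop]] := exists_last_drop hbn1 (drop_b hbn1).
  apply: (not_minimal_back fa amin (ltnW hpk) (_ : k < r)%N hrn hwp drop_r); first by nat_lia.
  move=> j h1 h2; apply: constr_lt_of_flat => //; first by nat_lia.
  apply/le_anti/andP; split; last by apply: mono; nat_lia.
  by rewrite leNgt; apply/negP; apply: no_drop.
apply: (not_minimal_tilt hp1n _ fa amin hpk _ drop_p hwp slack); last by nat_lia.
by move=> i h1 h2; apply: flat; nat_lia.
Qed.

Lemma minimizer_tail_const {a k p} : (3 <= n)%N -> feasible a -> minimizer k a ->
  (p < k)%N -> (k <= n)%N -> (forall l, (l < p)%N -> a l = sylv_recip l) ->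
  ((0 < p)%N -> head_prod a p = G * tail_sum a p) ->
  ((p.+1 < n)%N -> head_prod a p.+1 < G * tail_sum a p.+1) ->
  forall l, (p <= l)%N -> (l < n)%N -> a l = a p.
Proof.
move=> n_ge3 fa amin hpk hkn pre tight slack.
have mono := feasible_nonincr fa.
have hpn : (p < n)%N by nat_lia.
have drop_p : (0 < p)%N -> a p < a p.-1.
  move=> hp0; have hle : a p <= a p.-1 by apply: mono; nat_lia.
  rewrite lt_neqAle hle andbT; apply/eqP => /esym/(constr_lt_of_flat n_ge3 fa hp0 hpn).
  by rewrite tight // ltxx.
suff last_eq : a n.-1 = a p.
  move=> l h1 h2; apply/le_anti/andP; split; first by apply: mono.
  by rewrite -last_eq; apply: mono; nat_lia.
apply/le_anti/andP; split; first by apply: mono; nat_lia.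
rewrite leNgt; apply/negP => hlt.
case: (eqVneq (a k.-1) (a p)) => hk.
  apply: (not_minimal_const_block fa amin hpk hkn pre _ hlt) => i h1 h2.
  apply/le_anti/andP; split; first by apply: mono; nat_lia.
  by rewrite -{1}hk; apply: mono; nat_lia.
have hk1 : a k.-1 < a p by rewrite lt_neqAle hk /=; apply: mono; nat_lia.
have hpk1 : (p.+1 < k)%N.
  by rewrite ltnNge; apply/negP => h; move: hk1; rewrite (_ : k.-1 = p) ?ltxx //; nat_lia.
exact: (not_minimal_tail_drop n_ge3 fa amin hpk1 hkn drop_p (slack (leq_trans hpk1 hkn)) hk1).
Qed.

(* Compare with [ymin k.-1] = y(g,n,k); the case [k = 1], [g = 1] needs [n >= 3]. *)
Lemma not_minimal_sylv_prefix {a k} : (3 <= n)%N -> minimizer k a -> (0 < k)%N -> (k < n)%N ->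
  (forall l, (l < k)%N -> a l = sylv_recip l) -> False.
Proof.
move=> n_ge3 amin hk0 hkn pre.
have hqn : (k.-1 < n)%N by nat_lia.
have := amin _ (ymin_feasible _ hqn).
rewrite (head_prod_prefix pre) head_prod_ymin_ge; last by nat_lia.
rewrite (_ : k - k.-1 = 1)%N ?expr1; last by nat_lia.
rewrite -(prednK hk0) tsylvrS /level.
set q := k.-1; set N : R := (n - q)%:R.
have ht := tsylvr_gt0 q; have hs := sylvr_gt0 q; have hG := G_gt0.
have hN : 0 < N by rewrite ltr0n; nat_lia.
have key : sylvr q < N * tsylvr q.
  rewrite sylvrE; case: (posnP q) => hq0.
    have : 3%:R <= N :> R by rewrite ler_nat; nat_lia.
    by have := tsylvr_ge1 q; nra.
  have : 2%:R <= N :> R by rewrite ler_nat; nat_lia.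
  by have := tsylvr_ge2 q hq0; nra.
rewrite -mulrA -invfM ler_pM2l // lef_pV2 ?posrE ?mulr_gt0 //.
by rewrite /= mulrC ler_pM2r // leNgt key.
Qed.

Lemma minimizer_eq_ymin {a k} : (3 <= n)%N -> feasible a -> minimizer k a -> (0 < k)%N -> (k <= n)%N ->
  exists2 p, (p < k)%N & forall l, (l < n)%N -> a l = ymin p l.
Proof.
move=> n_ge3 fa amin hk0 hkn.
have ex : exists p, (p == n.-1) || (head_prod a p.+1 < G * tail_sum a p.+1).
  by exists n.-1; rewrite eqxx.
have [p hp pmin] := ex_minnP ex.
have hpn : (p < n)%N by have := pmin n.-1; rewrite eqxx => /(_ isT); nat_lia.
have tight j : (0 < j)%N -> (j <= p)%N -> head_prod a j = G * tail_sum a j.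
  move=> hj0 hjp; apply/le_anti; rewrite feasible_constr //=; last by nat_lia.
  rewrite leNgt; apply/negP => hlt.
  by have := pmin j.-1; rewrite prednK // hlt orbT => /(_ isT); nat_lia.
have pre := tight_prefix fa hpn tight.
case: (ltnP p k) => hpk; last first.
  by exfalso; apply: (not_minimal_sylv_prefix n_ge3 amin hk0 _ (fun l hl => pre l _)); nat_lia.
have slack : (p.+1 < n)%N -> head_prod a p.+1 < G * tail_sum a p.+1.
  move=> h; have hp' : (p == n.-1) = false by apply/eqP; nat_lia.
  by move: hp; rewrite hp'.
have const := minimizer_tail_const n_ge3 fa amin hpk hkn pre (tight p ^~ (leqnn p)) slack.
exists p => // l hl; rewrite /ymin; case: ifP => [/pre //|/negbT]; rewrite -leqNgt => hpl.
have hnp : (n - p)%:R != 0 :> R by rewrite pnatr_eq0; nat_lia.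
rewrite const //; apply: (mulfI hnp); rewrite levelE // -(tail_sum_prefix fa (ltnW hpn) pre).
by rewrite (tail_sum_const a p (a p)) // => i /andP[h1 h2]; apply: const.
Qed.

End Sequences.

Arguments tail_sum {R} n a j.
Arguments feasible {R} g n a.
Arguments ymin {R} g n p l.
Arguments minimizer {R} g n k a.

Section Rows.
Context {R : realType} {g n : nat}.
Hypothesis G_ge1 : 1 <= (g%:R : R).

Definition seq_of_row (x : 'rV[R]_n) i : R := odflt 0 (omap (fun j : 'I_n => x 0 j) (insub i)).

Lemma seq_of_rowE x (j : 'I_n) : seq_of_row x j = x 0 j.
Proof. by rewrite /seq_of_row valK. Qed.

Lemma fk_head_prod x k : (k <= n)%N -> fk k x = head_prod (seq_of_row x) k.
Proof.
move=> hk; rewrite /head_prod (big_nat_widen _ _ _ predT _ hk) big_mkord /fk.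
by apply: eq_bigr => i _; rewrite seq_of_rowE.
Qed.

Lemma tail_sum_seq_of_row x j : tail_sum n (seq_of_row x) j = \sum_(i < n | (j <= i)%N) x 0 i.
Proof. by rewrite /tail_sum big_geq_mkord; apply: eq_bigr => i _; rewrite seq_of_rowE. Qed.

Lemma inA_feasible x : inA g n x <-> feasible g n (seq_of_row x).
Proof.
have row_lt l (hl : (l < n)%N) : seq_of_row x l = x 0 (Ordinal hl) by rewrite -seq_of_rowE.
split=> [[hm [hl [hs hc]]] | fa].
  split.
  - by move=> i hi; rewrite (row_lt _ hi) (row_lt _ (ltnW hi)); apply: hm => /=.
  - rewrite /seq_of_row; case: insubP => [j hj vj|] //=.
    by apply: hl; rewrite vj; nat_lia.
  - by rewrite tail_sum_seq_of_row div1r in hs *; rewrite -hs; apply: eq_bigl.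
  - move=> j hj0 hj; rewrite tail_sum_seq_of_row -fk_head_prod; last by nat_lia.
    by apply: hc; nat_lia.
have mono := feasible_nonincr fa.
split; [|split; [|split]].
- by move=> i j hij; rewrite -!seq_of_rowE; apply: mono.
- by move=> i hi; rewrite -seq_of_rowE (_ : nat_of_ord i = n.-1); [exact: feasible_last _ fa | nat_lia].
- by rewrite div1r -(feasible_sum _ fa) tail_sum_seq_of_row; apply: eq_bigl.
- move=> k /andP[h1 h2]; rewrite -/(fk k x) fk_head_prod -?tail_sum_seq_of_row; last by nat_lia.
  by apply: (feasible_constr _ fa); nat_lia.
Qed.

Lemma minimizer_seq_of_row {k y} : (k <= n)%N ->
  (forall x : 'rV[R]_n, inA g n x -> fk k y <= fk k x) -> minimizer g n k (seq_of_row y).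
Proof.
move=> hk ymin c fc; pose x := \row_(i < n) c i.
have xc l : (l < n)%N -> seq_of_row x l = c l.
  by move=> hl; rewrite -[l]/(nat_of_ord (Ordinal hl)) seq_of_rowE mxE.
have fx : feasible g n (seq_of_row x) by apply: (eq_feasible G_ge1 _ fc) => l /xc.
have := ymin x ((inA_feasible x).2 fx); rewrite !fk_head_prod // => /le_trans; apply.
rewrite (@eq_head_prod _ _ c) => [|i hi]; [exact: lexx | apply: xc; nat_lia].
Qed.

Lemma yv_ymin p : (p < n)%N -> yv g n p.+1 = \row_(i < n) ymin g n p i :> 'rV[R]_n.
Proof.
move=> hp; apply/rowP => i; rewrite !mxE /ymin subn1 /= !div1r; case: ifP => _ //.
rewrite /level /tsylvr /sylvr /tsylv /sylv /= (_ : n - p.+1 + 1 = n - p)%N; last by nat_lia.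
by rewrite [(sylv0 g p - 1)%:R]natrB ?sylv0_gt0.
Qed.

End Rows.

Theorem proposition3p8 (R : realType) (g n k : nat) (y : 'rV[R]_n) :
  (1 <= g)%N -> (3 <= n)%N -> (1 <= k <= n)%N ->
  inA g n y ->
  (forall x : 'rV[R]_n, inA g n x -> fk k y <= fk k x) ->
  exists i0 : nat, (1 <= i0 <= k)%N /\ y = yv g n i0.
Proof.
move=> hg hn /andP[hk0 hkn] hy ymin_y.
have hG : 1 <= g%:R :> R by rewrite ler1n.
have fy := (inA_feasible y).1 hy.
have [p hpk hp] := minimizer_eq_ymin hG hn fy (minimizer_seq_of_row hG hkn ymin_y) hk0 hkn.
exists p.+1; split; first by rewrite ltn0Sn.
rewrite yv_ymin; last by nat_lia.
by apply/rowP => i; rewrite mxE -hp // seq_of_rowE.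
Qed.
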